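(* Let $a>0$, $\beta>0$, let $\lambda$ be feasible, let $0<\xi<a$, and let $0<C_L<1$. Then there exists $0<\delta_L(\beta,\lambda,\xi/a,C_L)\le\delta_\mu(\beta,\lambda)$ such that for every $0<\delta\le\delta_L$ and every $k\ge k_0(\delta)$ we have $L\ge C_L$, where \[ L=\left(1-\mathrm{e}^{-2k\xi}\right)+\frac{\lambda^2\delta^{2\beta}+4}{(2\delta+\lambda\delta^{\beta})^2}\,\mathrm{e}^{-4ka}\left(\mathrm{e}^{2k\xi}-1\right). \]
   Context: For $0<\delta<1$ and constants $\beta>0$, $\lambda\in\mathbb{R}$, put $\mu=\delta+\lambda\delta^{\beta}$. The constant $\lambda$ is called feasible if $\lambda>0$ when $0<\beta<1$, $\lambda\ge -1$ when $\beta=1$, and $\lambda\neq 0$ when $\beta>1$. For feasible $\lambda$, $\delta_\mu=\delta_\mu(\beta,\lambda)\in(0,1)$ denotes a number such that $\mu\ge 0$ for all $0<\delta\le\delta_\mu$. Define \[ k_0(\delta)=\frac{1}{2a}\ln\!\left(\frac{1}{2\delta^2+\lambda\delta^{\beta+1}}\right). \] *)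

From Stdlib Require Import Reals.
Open Scope R_scope.

Definition feasible (beta lam : R) : Prop :=
  (0 < beta < 1 /\ lam > 0) \/ (beta = 1 /\ lam >= -1) \/ (beta > 1 /\ lam <> 0).

Definition mu (beta lam d : R) : R := d + lam * Rpower d beta.

Definition is_delta_mu (beta lam dm : R) : Prop :=
  0 < dm < 1 /\ forall d, 0 < d <= dm -> 0 <= mu beta lam d.

Definition k0 (a beta lam d : R) : R :=
  / (2 * a) * ln (/ (2 * d ^ 2 + lam * Rpower d (beta + 1))).

Definition Lfun (a xi beta lam d k : R) : R :=
  (1 - exp (- (2 * k * xi)))
  + (lam ^ 2 * Rpower d (2 * beta) + 4) / (2 * d + lam * Rpower d beta) ^ 2
    * exp (- (4 * k * a)) * (exp (2 * k * xi) - 1).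

(* The second summand of L is nonnegative, so it suffices that
   1 - exp(-2 k xi) >= C_L, i.e. 2 k xi >= -ln(1 - C_L).  Since
   2 delta^2 + lambda delta^(beta+1) = delta (2 delta + lambda delta^beta)
   <= delta (2 + |lambda|), the condition k >= k_0(delta) gives
   2 k xi = (xi/a) 2 a k >= -(xi/a) ln(delta (2 + |lambda|)), which exceeds
   -ln(1 - C_L) once delta (2 + |lambda|) <= (1 - C_L)^(a/xi). *)

From Stdlib Require Import Reals Lra.
Open Scope R_scope.

Lemma exp_le_compat (x y : R) : x <= y -> exp x <= exp y.
Proof.
  intros [Hlt | ->]; [now apply Rlt_le, exp_increasing | apply Rle_refl].
Qed.

Lemma ln_le_compat (x y : R) : 0 < x -> x <= y -> ln x <= ln y.
Proof.
  intros Hx [Hlt | ->]; [now apply Rlt_le, ln_increasing | apply Rle_refl].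
Qed.

Lemma Rpower_le_1 (x b : R) : 0 < x <= 1 -> 0 <= b -> Rpower x b <= 1.
Proof.
  intros Hx Hb.
  replace 1 with (Rpower 1 b) by (unfold Rpower; rewrite ln_1, Rmult_0_r; apply exp_0).
  now apply Rle_Rpower_l.
Qed.

Lemma Lfun_ge_1_minus_exp (a xi beta lam d k : R) :
  0 <= k * xi -> Lfun a xi beta lam d k >= 1 - exp (- (2 * k * xi)).
Proof.
  intros Hkxi. unfold Lfun.
  assert (Hfrac : 0 <= (lam ^ 2 * Rpower d (2 * beta) + 4) / (2 * d + lam * Rpower d beta) ^ 2).
  { assert (0 < Rpower d (2 * beta)) by (unfold Rpower; apply exp_pos).
    assert (Hnum : 0 <= lam ^ 2 * Rpower d (2 * beta) + 4)
      by (pose proof (pow2_ge_0 lam); nra).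
    destruct (pow2_ge_0 (2 * d + lam * Rpower d beta)) as [Hpos | <-].
    - now apply Rle_mult_inv_pos.
    - unfold Rdiv; rewrite Rinv_0, Rmult_0_r; apply Rle_refl. }
  assert (Hgrowth : 1 <= exp (2 * k * xi))
    by (rewrite <- exp_0; apply exp_le_compat; lra).
  pose proof (exp_pos (- (4 * k * a))).
  assert (0 <= (lam ^ 2 * Rpower d (2 * beta) + 4) / (2 * d + lam * Rpower d beta) ^ 2
                * exp (- (4 * k * a)) * (exp (2 * k * xi) - 1))
    by (apply Rmult_le_pos; [apply Rmult_le_pos|]; lra).
  lra.
Qed.

Lemma one_minus_exp_neg_ge (C t : R) : C < 1 -> - ln (1 - C) <= t -> C <= 1 - exp (- t).
Proof.
  intros HC Ht.
  assert (exp (- t) <= 1 - C).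
  { rewrite <- (exp_ln (1 - C)) by lra. apply exp_le_compat; lra. }
  lra.
Qed.

Lemma k0_argument_factor (beta lam d : R) : 0 < d ->
  2 * d ^ 2 + lam * Rpower d (beta + 1) = d * (2 * d + lam * Rpower d beta).
Proof. intros Hd. rewrite Rpower_plus, Rpower_1 by exact Hd. ring. Qed.

Lemma k0_argument_bounds (beta lam d : R) :
  0 < beta -> 0 < d <= 1 -> 0 <= mu beta lam d ->
  0 < d * (2 * d + lam * Rpower d beta) <= d * (2 + Rabs lam).
Proof.
  unfold mu. intros Hb Hd Hmu.
  assert (Hpow : Rpower d beta <= 1) by (apply Rpower_le_1; lra).
  assert (0 < Rpower d beta) by (unfold Rpower; apply exp_pos).
  assert (lam * Rpower d beta <= Rabs lam).
  { pose proof (Rle_abs lam); pose proof (Rabs_pos lam). nra. }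
  split; nra.
Qed.

Lemma exponent_ge_of_k_ge (a r xi M k B : R) :
  0 < a -> 0 < r -> xi = r * a -> 0 < M -> ln M <= B / r ->
  k >= / (2 * a) * ln (/ M) -> - B <= 2 * k * xi.
Proof.
  intros Ha Hr Hxi HM HB Hk.
  rewrite ln_Rinv in Hk by exact HM.
  assert (Hak : 2 * a * k >= - ln M).
  { apply (Rmult_ge_compat_l (2 * a)) in Hk; [|lra].
    rewrite <- Rmult_assoc, Rinv_r in Hk; lra. }
  assert (r * ln M <= B).
  { apply (Rmult_le_compat_l r) in HB; [|lra].
    replace (r * (B / r)) with B in HB by (field; lra). exact HB. }
  assert (2 * k * xi = r * (2 * a * k)) as -> by (rewrite Hxi; ring).
  nra.
Qed.

Theorem lemma4p2 :
  forall (beta lam dm CL r : R),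
    0 < beta -> feasible beta lam -> is_delta_mu beta lam dm ->
    0 < CL < 1 -> 0 < r < 1 ->
    exists dL : R, 0 < dL <= dm /\
      forall (a xi : R), 0 < a -> 0 < xi < a -> xi / a = r ->
      forall d k : R, 0 < d <= dL -> k >= k0 a beta lam d ->
        Lfun a xi beta lam d k >= CL.
Proof.
  intros beta lam dm CL r Hb _ [[Hdm0 Hdm1] Hmu] [HC0 HC1] [Hr0 _].
  set (c := exp (ln (1 - CL) / r)).
  pose proof (Rabs_pos lam).
  assert (Hc : 0 < c / (2 + Rabs lam)) by (apply Rdiv_lt_0_compat; [apply exp_pos | lra]).
  exists (Rmin dm (c / (2 + Rabs lam))).
  split; [split; [now apply Rmin_glb_lt | apply Rmin_l] |].
  intros a xi Ha [Hxi0 _] Hxr d k [Hd0 HdL] Hk.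
  pose proof (Rle_trans _ _ _ HdL (Rmin_l _ _)) as Hddm.
  pose proof (Rle_trans _ _ _ HdL (Rmin_r _ _)) as Hdc.
  destruct (k0_argument_bounds beta lam d Hb ltac:(lra) (Hmu d (conj Hd0 Hddm)))
    as [HM0 HMle].
  assert (HMc : d * (2 * d + lam * Rpower d beta) <= c).
  { apply (Rmult_le_compat_r (2 + Rabs lam)) in Hdc; [|lra].
    replace (c / (2 + Rabs lam) * (2 + Rabs lam)) with c in Hdc by (field; lra). lra. }
  unfold k0 in Hk. rewrite k0_argument_factor in Hk by exact Hd0.
  assert (Hexponent : - ln (1 - CL) <= 2 * k * xi).
  { apply (exponent_ge_of_k_ge a r xi (d * (2 * d + lam * Rpower d beta)) k
             (ln (1 - CL)) Ha Hr0); try assumption.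
    - rewrite <- Hxr; field; lra.
    - unfold c in HMc. rewrite <- (ln_exp (ln (1 - CL) / r)).
      now apply ln_le_compat. }
  assert (HlnC : ln (1 - CL) < 0) by (rewrite <- ln_1; apply ln_increasing; lra).
  apply Rle_ge, (Rle_trans _ (1 - exp (- (2 * k * xi)))).
  - now apply one_minus_exp_neg_ge.
  - apply Rge_le, Lfun_ge_1_minus_exp. nra.
Qed.
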